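(* Let $m=d_1+\cdots+d_k$ with $d_j\ge1$, $W_1,\ldots,W_k$ 2-dimensional vector spaces, and suppose the 1-dimensional subspaces $$\Gamma_j=\bigotimes_{r\ne j}\bigotimes_{p=1}^{d_r}a_j^{r,p},\qquad a_j^{r,p}\subset W_r^*\ \text{1-dimensional},$$ are such that $\sum_{j=1}^k ins_j(S^{d_j}W_j^*\otimes\Gamma_j)$ has dimension $m+1$. Then $a_j^{r,1}=\cdots=a_j^{r,d_r}=:a_j^r$ for all $j\neq r$, i.e. $\Gamma_j=\bigotimes_{r\ne j}(a_j^r)^{\otimes d_r}$.
   Context: The vector spaces are real or complex. $S^dW^*\subset(W^* )^{\otimes d}$ denotes the symmetric tensors. For each $j$, $ins_j:(W_j^* )^{\otimes d_j}\otimes\bigotimes_{i\ne j}(W_i^* )^{\otimes d_i}\to\bigotimes_{i=1}^k(W_i^* )^{\otimes d_i}$ places the first factor into the $j$-th group of $d_j$ slots; in $\bigotimes_{r\ne j}\bigotimes_{p}a_j^{r,p}$ the factor $a_j^{r,p}$ occupies the $p$-th slot of the $r$-th group. *)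

From HB Require Import structures.
From mathcomp Require Import all_boot all_order all_algebra all_fingroup.
From mathcomp Require Import reals.
From mathcomp.real_closed Require Import complex.
Set Implicit Arguments. Unset Strict Implicit. Unset Printing Implicit Defensive.
Import GRing.Theory.
Local Open Scope ring_scope.

(* W_r^* is identified with K^2 ('rV[K]_2).  A tensor in
   bigotimes_r (W_r^* )^{(x) d_r} is a K-valued function on the multi-indices
   {ffun slot -> 'I_2}.  A tensor in (W_j^* )^{(x) d_j} is a K-valued function
   on {ffun 'I_(d j) -> 'I_2}. *)

Section Tensors.
Variables (K : fieldType) (k : nat) (d : 'I_k -> nat).

Definition slot := {r : 'I_k & 'I_(d r)}.
Definition mindex := {ffun slot -> 'I_2}.
Definition tensor := {ffun mindex -> K^o}.

Definition gindex (j : 'I_k) := {ffun 'I_(d j) -> 'I_2}.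
Definition gtensor (j : 'I_k) := {ffun gindex j -> K^o}.

Definition permt (j : 'I_k) (s : {perm 'I_(d j)}) (f : gtensor j) : gtensor j :=
  [ffun i : gindex j => f [ffun p => i (s p)]].

(* S^{d_j} W_j^* : the symmetric tensors, i.e. those fixed by every permutation
   of the d_j slots *)
Definition symt (j : 'I_k) : {vspace gtensor j} :=
  (\bigcap_(s : {perm 'I_(d j)}) lker (linfun (fun f => permt s f - f)))%VS.

Definition restr (j : 'I_k) (i : mindex) : gindex j :=
  [ffun p => i (Tagged (fun r => 'I_(d r)) p)].

(* ins_j (f (x) Gamma_j) where Gamma_j is spanned by the pure tensor
   bigotimes_{r <> j} bigotimes_p a j r p *)
Definition insj (a : forall j r : 'I_k, 'I_(d r) -> 'rV[K]_2) (j : 'I_k)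
  (f : gtensor j) : tensor :=
  [ffun i : mindex => f (restr j i) *
     \prod_(s : slot | tag s != j) (a j (tag s) (tagged s)) 0 (i s)].

Definition insSym (a : forall j r : 'I_k, 'I_(d r) -> 'rV[K]_2) (j : 'I_k)
  : {vspace tensor} :=
  (linfun (insj a (j := j)) @: symt j)%VS.

End Tensors.

Definition cor233_over (K : fieldType) : Prop :=
  forall (k : nat) (d : 'I_k -> nat)
    (a : forall j r : 'I_k, 'I_(d r) -> 'rV[K]_2),
    (forall j, (0 < d j)%N) ->
    (forall j r (p : 'I_(d r)), r != j -> a j r p != 0) ->
    \dim (\sum_(j < k) insSym a j)%VS = (\sum_(j < k) d j).+1 ->
    forall j r (p q : 'I_(d r)), r != j ->
      (<[a j r p]> = <[a j r q]>)%VS.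

From HB Require Import structures.
From mathcomp Require Import all_boot all_order all_algebra all_fingroup.
From mathcomp Require Import reals.
From mathcomp.real_closed Require Import complex.
From mathcomp Require Import zify.
Set Implicit Arguments. Unset Strict Implicit. Unset Printing Implicit Defensive.
Import GRing.Theory Num.Theory.
Local Open Scope ring_scope.

(* Suppose a_j^{r,p} and a_j^{r,q} are not proportional for some r <> j.
   A vector x of W_r^* = K^2 yields the form u |-> det2 u x, so a pure tensor
   of such forms pairs with a pure tensor as the product of the slotwise
   determinants.  Choosing d_r + 1 generic vectors gen_{r,n} in
   each W_r^*, the m tensors ins_l((gen_{l,p+1})^{(x) d_l} (x) Gamma_l), one
   per slot (l, p), admit a biorthogonal system of pure forms, hence are
   independent.  A further form vanishing on all of them detects
   ins_r((gen_{r,0})^{(x) d_r} (x) Gamma_r), and the difference of the two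
   pure forms that differ by swapping a_j^{r,p} and a_j^{r,q} vanishes on all
   the previous tensors (they are symmetric in the r-th group of slots) but
   not on ins_j((gen_{j,0})^{(x) d_j} (x) Gamma_j).  This gives m + 2
   independent tensors in a space of dimension m + 1. *)

Lemma lfunE_linear (K : fieldType) (aT rT : vectType K) (f : aT -> rT) :
  linear f -> linfun f =1 f.
Proof.
move=> f_lin.
exact: (lfunE (HB.pack f (GRing.isLinear.Build _ _ _ _ f f_lin) : {linear aT -> rT})).
Qed.

Section Det2.
Variable K : fieldType.
Implicit Types (t : K) (u v x y : 'rV[K]_2).

Definition det2 u v : K := u 0 0 * v 0 1 - u 0 1 * v 0 0.

Definition perp x : 'rV[K]_2 :=
  \row_(b < 2) if b == 0 :> nat then x 0 1 else - x 0 0.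

Definition vec1 t : 'rV[K]_2 := \row_(b < 2) if b == 0 :> nat then 1 else t.

Definition slope x : K := x 0 1 / x 0 0.

Lemma rV2P x y : x 0 0 = y 0 0 -> x 0 1 = y 0 1 -> x = y.
Proof.
move=> e0 e1; apply/rowP => i.
by have [->|->] : i = 0 \/ i = 1 by case: i => -[|[|//]] ?; [left|right]; apply: val_inj.
Qed.

Lemma det2xx x : det2 x x = 0.
Proof. by rewrite /det2 mulrC subrr. Qed.

Lemma det2C x y : det2 y x = - det2 x y.
Proof. by rewrite /det2 opprB [x 0 0 * _]mulrC [x 0 1 * _]mulrC. Qed.

Lemma det2_eq0_vline x y : x != 0 -> det2 y x = 0 -> y \in <[x]>%VS.
Proof.
move=> x_neq0 /eqP; rewrite subr_eq0 => /eqP y0x1.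
have [x0|x0] := eqVneq (x 0 0) 0.
  have x1 : x 0 1 != 0 by apply: contraNneq x_neq0 => x1; apply/eqP/rV2P; rewrite !mxE.
  apply/vlineP; exists (y 0 1 / x 0 1); apply: rV2P; rewrite !mxE ?mulfVK //.
  by move: y0x1; rewrite x0 !mulr0 => /eqP; rewrite mulf_eq0 (negbTE x1) orbF => /eqP.
apply/vlineP; exists (y 0 0 / x 0 0); apply: rV2P; rewrite !mxE ?mulfVK //.
by rewrite mulrAC y0x1 mulfK.
Qed.

Lemma det2_vec1 t t' : det2 (vec1 t) (vec1 t') = t' - t.
Proof. by rewrite /det2 !mxE /= mul1r mulr1. Qed.

Lemma det2_vec1_neq0 x t : x != 0 -> t != slope x -> det2 x (vec1 t) != 0.
Proof.
move=> x_neq0 t_neq; rewrite /det2 !mxE /= mulr1 subr_eq0.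
have [x0|x0] := eqVneq (x 0 0) 0.
  rewrite x0 mul0r eq_sym; apply: contraNneq x_neq0 => x1.
  by apply/eqP/rV2P; rewrite !mxE.
by apply: contra t_neq; rewrite /slope => /eqP <-; rewrite [_ * t]mulrC mulfK.
Qed.

Section Pairing.
Variable S : finType.
Implicit Types (w T : {ffun {ffun S -> 'I_2} -> K^o}) (vs xs : S -> 'rV[K]_2).

Definition pure vs : {ffun {ffun S -> 'I_2} -> K^o} :=
  [ffun i : {ffun S -> 'I_2} => \prod_s vs s 0 (i s)].

Definition pairing T w : K := \sum_i T i * w i.

Lemma pairing_linear w : linear (fun T => pairing T w : K^o).
Proof.
move=> c T1 T2; rewrite /pairing scaler_sumr -big_split; apply: eq_bigr => i _.
by rewrite !ffunE mulrDl scalerAl.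
Qed.

Definition pairingL w : 'Hom({ffun {ffun S -> 'I_2} -> K^o}, K^o) :=
  linfun (fun T => pairing T w : K^o).

Lemma pairingLE w T : pairingL w T = pairing T w.
Proof. by rewrite lfunE_linear //; apply: pairing_linear. Qed.

Lemma pairingBr T w1 w2 : pairing T (w1 - w2) = pairing T w1 - pairing T w2.
Proof. by rewrite /pairing -sumrB; apply: eq_bigr => i _; rewrite !ffunE mulrBr. Qed.

Lemma pairing_pure_perp vs xs :
  pairing (pure vs) (pure (fun s => perp (xs s))) = \prod_s det2 (vs s) (xs s).
Proof.
rewrite /pairing; transitivity (\prod_s \sum_(b < 2) vs s 0 b * perp (xs s) 0 b).
  by rewrite bigA_distr_bigA; apply: eq_bigr => i _; rewrite !ffunE big_split.
apply: eq_bigr => s _; rewrite big_ord_recl big_ord1 !mxE /= mulrN.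
by rewrite (_ : lift ord0 ord0 = 1) //; apply: val_inj.
Qed.

End Pairing.
End Det2.

Section VectorSpaces.
Variables (K : fieldType) (vT : vectType K).

Lemma biorthogonal_dim (I : finType) (v : I -> vT) (f : I -> 'Hom(vT, K^o)) :
    (forall i j, i != j -> f i (v j) = 0) -> (forall i, f i (v i) != 0) ->
  (#|I| <= \dim (\sum_i <[v i]>))%N.
Proof.
move=> f_off f_diag; set U := (\sum_i _)%VS.
pose coords x : {ffun I -> K^o} := [ffun i => f i x].
have coords_linear : linear coords.
  by move=> c x y; apply/ffunP => i; rewrite !ffunE linearP.
pose F := linfun coords.
have F_onto : (fullv <= F @: U)%VS.
  apply/subvP => g _; apply/memv_imgP.
  exists (\sum_j (g j / f j (v j)) *: v j).
    by apply: memv_sumr => j _; rewrite memvZ // memv_line.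
  rewrite lfunE_linear //; apply/ffunP => i; rewrite ffunE linear_sum (bigD1 i) //=.
  rewrite big1 => [|j ji]; last by rewrite linearZ /= (f_off i j) ?scaler0 // eq_sym.
  by rewrite addr0 linearZ /= [_ *: _]divfK.
have := dimvS F_onto; rewrite dimvf /dim /= muln1 => /leq_trans; apply.
by rewrite -(limg_ker_dim F U) leq_addl.
Qed.

Lemma ltn_dimv_add_line (U : {vspace vT}) (f : 'Hom(vT, K^o)) v :
  (U <= lker f)%VS -> f v != 0 -> (\dim U < \dim (U + <[v]>))%N.
Proof.
move=> Uf fv; rewrite (ltn_leqif (dimv_leqif_sup (addvSl U <[v]>))).
rewrite subv_add subvv /= -memvE; apply: contra fv => /(subvP Uf).
by rewrite memv_ker.
Qed.

End VectorSpaces.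

Section Fresh.
Variable K : numDomainType.
Implicit Type B : seq K.

Lemma uniq_natr_iota m n : uniq [seq i%:R : K | i <- iota m n].
Proof. by rewrite map_inj_uniq ?iota_uniq // => i i' /eqP; rewrite eqr_nat => /eqP. Qed.

Definition fresh B n : seq K :=
  [seq x <- [seq m%:R | m <- iota 0 (size B + n)] | x \notin B].

Lemma fresh_uniq B n : uniq (fresh B n).
Proof. exact/filter_uniq/uniq_natr_iota. Qed.

Lemma size_fresh B n : (n <= size (fresh B n))%N.
Proof.
set s := [seq m%:R : K | m <- iota 0 (size B + n)].
have inB_small : (count (mem B) s <= size B)%N.
  rewrite -size_filter uniq_leq_size ?filter_uniq ?uniq_natr_iota // => x.
  by rewrite mem_filter => /andP[].
rewrite size_filter -/s -[count _ s]/(count (predC (mem B)) s).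
have := count_predC (mem B) s; rewrite size_map size_iota; lia.
Qed.

Lemma ltn_size_fresh B n i : (i < n)%N -> (i < size (fresh B n))%N.
Proof. by move=> lt_in; apply: leq_trans lt_in (size_fresh B n). Qed.

Lemma fresh_notin B n x : x \in fresh B n -> x \notin B.
Proof. by rewrite mem_filter => /andP[]. Qed.

End Fresh.

Lemma big_tag_eq (R : Type) (idx : R) (op : Monoid.com_law idx) (I : finType)
    (J : I -> finType) (i0 : I) (F : {i : I & J i} -> R) :
  \big[op/idx]_(p | tag p == i0) F p = \big[op/idx]_(j : J i0) F (Tagged J j).
Proof.
rewrite -(big_pred1_eq op i0 (fun i => \big[op/idx]_(j : J i) F (Tagged J j))).
rewrite (sig_big_dep (I := I) (J := J) _ (fun _ _ => true)).
by apply: eq_big => [[i j]|[i j] _] //=; rewrite andbT.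
Qed.

Section Construction.
Variables (K : numFieldType) (k : nat) (d : 'I_k -> nat).
Unset Implicit Arguments.
Variable a : forall j r : 'I_k, 'I_(d r) -> 'rV[K]_2.
Set Implicit Arguments.
Local Notation slot := (slot d).
Local Notation tensor := (tensor K d).
Local Notation Sum := (\sum_(j < k) insSym a j)%VS.
Implicit Types (j l r : 'I_k) (c : 'rV[K]_2) (s : slot).

Definition tensor_pow j c : gtensor K d j :=
  [ffun i : gindex d j => \prod_p c 0 (i p)].

Lemma tensor_pow_sym j c : tensor_pow j c \in symt K d j.
Proof.
have permt_linear (s : {perm 'I_(d j)}) :
    linear (fun f : gtensor K d j => permt s f - f).
  by move=> x f g; apply/ffunP => i; rewrite !ffunE scalerBr opprD addrACA.
rewrite memvE; apply/subv_bigcapP => s _.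
rewrite -memvE memv_ker (lfunE_linear (permt_linear s)) subr_eq0.
apply/eqP/ffunP => i; rewrite !ffunE [RHS](reindex_inj (@perm_inj _ s)).
by apply: eq_bigr => p _; rewrite ffunE.
Qed.

Lemma insj_linear j : linear (insj a (j := j)).
Proof. by move=> x f g; apply/ffunP => i; rewrite !ffunE mulrDl scalerAl. Qed.

Definition factor l c s : 'rV[K]_2 :=
  if tag s == l then c else a l (tag s) (tagged s).

Definition insPow l c : tensor := pure (factor l c).

Lemma insj_tensor_pow l c : insj a (tensor_pow l c) = insPow l c.
Proof.
apply/ffunP => i; rewrite !ffunE [RHS](bigID (fun s : slot => tag s == l)) /=.
congr (_ * _); last by apply: eq_bigr => s /negbTE; rewrite /factor => ->.
by rewrite big_tag_eq; apply: eq_bigr => p _; rewrite /factor /= eqxx ffunE.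
Qed.

Lemma insPow_in_sum l c : insPow l c \in Sum.
Proof.
have : insPow l c \in insSym a l.
  rewrite -insj_tensor_pow -(lfunE_linear (@insj_linear l)).
  exact/memv_img/tensor_pow_sym.
by apply: subvP; apply: (sumv_sup l).
Qed.

Lemma card_slot : #|{: slot}| = (\sum_(j < k) d j)%N.
Proof.
rewrite card_tagged sumnE big_map big_enum /=.
by apply: eq_bigr => j _; rewrite card_ord.
Qed.

Definition slopes r : seq K :=
  [seq slope (a j r p) | j <- enum 'I_k, p <- enum 'I_(d r)].

(* d_r + 1 pairwise independent vectors of W_r^*, none of them proportional
   to a nonzero a_j^{r,p} *)
Definition gen r n : 'rV[K]_2 := vec1 (nth 0 (fresh (slopes r) (d r).+1) n).

Lemma det2_gen r n n' : (n <= d r)%N -> (n' <= d r)%N -> n != n' ->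
  det2 (gen r n) (gen r n') != 0.
Proof.
move=> n_le n'_le nn'.
by rewrite det2_vec1 subr_eq0 nth_uniq ?fresh_uniq 1?eq_sym // ltn_size_fresh.
Qed.

Lemma det2_a_gen j r p n :
  a j r p != 0 -> (n <= d r)%N -> det2 (a j r p) (gen r n) != 0.
Proof.
move=> a_neq0 n_le; apply: det2_vec1_neq0 => //.
have t_fresh : nth 0 (fresh (slopes r) (d r).+1) n \in fresh (slopes r) (d r).+1.
  by rewrite mem_nth // ltn_size_fresh.
apply: contraNneq (fresh_notin t_fresh) => ->.
by apply: allpairs_f; rewrite mem_enum.
Qed.

Hypothesis a_neq0 : forall j r (p : 'I_(d r)), r != j -> a j r p != 0.

Definition dual (xs : slot -> 'rV[K]_2) : tensor := pure (fun s => perp (xs s)).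

Definition xi0 s := gen (tag s) (tagged s).+1.

Definition xi s0 s := if s == s0 then gen (tag s) 0 else xi0 s.

Definition basic s := insPow (tag s) (xi0 s).

Lemma det2_factor_xi0 l c s : tag s != l -> det2 (factor l c s) (xi0 s) != 0.
Proof. by move=> sl; rewrite /factor (negbTE sl) det2_a_gen ?a_neq0. Qed.

Lemma det2_factor_gen0_xi0 l s : det2 (factor l (gen l 0) s) (xi0 s) != 0.
Proof.
have [sl|] := eqVneq (tag s) l; last exact: det2_factor_xi0.
by case: s sl => r p /= <-; rewrite /factor /xi0 /= eqxx det2_gen.
Qed.

Lemma pairing_basic_xi s0 s : s0 != s -> pairing (basic s) (dual (xi s0)) = 0.
Proof.
move=> s0s; rewrite pairing_pure_perp; apply/eqP/prodf_eq0; exists s => //.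
by rewrite /factor eqxx /xi ifN_eqC // det2xx.
Qed.

Lemma pairing_basic_xi_diag s0 : pairing (basic s0) (dual (xi s0)) != 0.
Proof.
rewrite pairing_pure_perp; apply/prodf_neq0 => s _.
have [ls|ls] := eqVneq (tag s) (tag s0); last first.
  rewrite /xi ifN ?det2_factor_xi0 //.
  by apply: contraNneq ls => ->.
case: s0 s ls => [l p0] [r p] /= rl; subst r.
rewrite /factor /xi /xi0 /= eqxx eq_Tagged /=.
case: (p =P p0) => [_|pp0]; first exact: det2_gen.
by apply: det2_gen => //; rewrite eqSS; apply/eqP => /val_inj/esym.
Qed.

Lemma pairing_basic_xi0 s : pairing (basic s) (dual xi0) = 0.
Proof.
rewrite pairing_pure_perp; apply/eqP/prodf_eq0; exists s => //.
by rewrite /factor eqxx det2xx.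
Qed.

Lemma pairing_insPow_gen0_xi0 l : pairing (insPow l (gen l 0)) (dual xi0) != 0.
Proof.
by rewrite pairing_pure_perp; apply/prodf_neq0 => s _; apply: det2_factor_gen0_xi0.
Qed.

Section Swap.
Variables (j0 r0 : 'I_k) (p q : 'I_(d r0)).
Hypotheses (r0_neq_j0 : r0 != j0) (a_indep : det2 (a j0 r0 p) (a j0 r0 q) != 0).

Local Notation ap := (a j0 r0 p).
Local Notation aq := (a j0 r0 q).
Let sp : slot := Tagged (fun r => 'I_(d r)) p.
Let sq : slot := Tagged (fun r => 'I_(d r)) q.

Lemma sp_neq_sq : sp != sq.
Proof.
by rewrite /sp /sq eq_Tagged /=; apply: contraNneq a_indep => ->; rewrite det2xx.
Qed.

Definition xi_at u v s := if s == sp then u else if s == sq then v else xi0 s.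

(* vanishes on every pure tensor whose factors at [sp] and [sq] coincide *)
Definition swap_form : tensor := dual (xi_at aq ap) - dual (xi_at ap aq).

Lemma prod_det2_xi_at (vs : slot -> 'rV[K]_2) u v :
  \prod_s det2 (vs s) (xi_at u v s) =
  det2 (vs sp) u * det2 (vs sq) v *
  \prod_(s | (s != sp) && (s != sq)) det2 (vs s) (xi0 s).
Proof.
have sq_neq_sp : (sq == sp) = false by rewrite eq_sym (negbTE sp_neq_sq).
rewrite (bigD1 sp) // (bigD1 sq) /=; last by rewrite eq_sym sp_neq_sq.
rewrite /xi_at eqxx sq_neq_sp eqxx mulrA; congr (_ * _).
by apply: eq_bigr => s /andP[/negbTE -> /negbTE ->].
Qed.

Lemma pairing_pure_swap (vs : slot -> 'rV[K]_2) :
  pairing (pure vs) swap_form =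
  (det2 (vs sp) aq * det2 (vs sq) ap - det2 (vs sp) ap * det2 (vs sq) aq) *
  \prod_(s | (s != sp) && (s != sq)) det2 (vs s) (xi0 s).
Proof. by rewrite pairingBr !pairing_pure_perp !prod_det2_xi_at -mulrBl. Qed.

Lemma pairing_insPow_swap c : pairing (insPow r0 c) swap_form = 0.
Proof.
by rewrite pairing_pure_swap /factor /= eqxx [det2 c aq * _]mulrC subrr mul0r.
Qed.

Lemma pairing_basic_swap s : pairing (basic s) swap_form = 0.
Proof.
have [sr0|sr0] := eqVneq (tag s) r0.
  by case: s sr0 => l p' /= lr0; subst l; apply: pairing_insPow_swap.
rewrite pairing_pure_swap (bigD1 s) /=; last first.
  by apply/andP; split; apply: contraNneq sr0 => ->.
by rewrite /factor eqxx det2xx mul0r mulr0.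
Qed.

Lemma pairing_insPow_gen0_swap : pairing (insPow j0 (gen j0 0)) swap_form != 0.
Proof.
rewrite pairing_pure_swap /factor /= (negbTE r0_neq_j0) !det2xx mulr0 subr0.
rewrite (det2C ap aq) mulrN mulNr oppr_eq0 !mulf_neq0 //.
by apply/prodf_neq0 => s _; apply: det2_factor_gen0_xi0.
Qed.

Lemma dim_sum_insSym_gt : ((\sum_(j < k) d j).+2 <= \dim Sum)%N.
Proof.
set U := (\sum_(s : slot) <[basic s]>)%VS.
set eA := insPow r0 (gen r0 0); set eB := insPow j0 (gen j0 0).
have U_in_ker (w : tensor) :
    (forall s, pairing (basic s) w = 0) -> (U <= lker (pairingL w))%VS.
  move=> basic_w; apply/subv_sumP => s _.
  by rewrite -memvE memv_ker pairingLE basic_w.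
have dimU : (\sum_j d j <= \dim U)%N.
  rewrite -card_slot; apply: (biorthogonal_dim (f := fun s => pairingL (dual (xi s)))).
    by move=> s0 s ss0; rewrite pairingLE pairing_basic_xi.
  by move=> s; rewrite pairingLE pairing_basic_xi_diag.
have dimUA : (\dim U < \dim (U + <[eA]>))%N.
  apply: (ltn_dimv_add_line (U_in_ker _ pairing_basic_xi0)).
  by rewrite pairingLE pairing_insPow_gen0_xi0.
have dimUAB : (\dim (U + <[eA]>) < \dim (U + <[eA]> + <[eB]>))%N.
  apply: (@ltn_dimv_add_line _ _ _ (pairingL swap_form)).
    rewrite subv_add U_in_ker; last exact: pairing_basic_swap.
    by rewrite -memvE memv_ker pairingLE pairing_insPow_swap eqxx.
  by rewrite pairingLE pairing_insPow_gen0_swap.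
have UAB_sub : (U + <[eA]> + <[eB]> <= Sum)%VS.
  rewrite !subv_add -!memvE !insPow_in_sum !andbT.
  by apply/subv_sumP => s _; rewrite -memvE insPow_in_sum.
apply: leq_trans (dimvS UAB_sub); apply: leq_trans dimUAB.
by rewrite ltnS; apply: leq_trans dimUA.
Qed.

End Swap.
End Construction.

Lemma cor233_over_numFieldType (K : numFieldType) : cor233_over K.
Proof.
move=> k d a _ a_neq0 dim_sum j r p q rj.
have [a_dep|a_indep] := eqVneq (det2 (a j r p) (a j r q)) 0.
  apply/eqP; rewrite eqEdim !dim_vline !a_neq0 //= andbT -memvE.
  exact: det2_eq0_vline (a_neq0 _ _ _ rj) a_dep.
by have := dim_sum_insSym_gt a_neq0 rj a_indep; rewrite dim_sum ltnn.
Qed.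

Theorem corollary2p33 (R : realType) :
  cor233_over R /\ cor233_over (complex R).
Proof. by split; apply: cor233_over_numFieldType. Qed.
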